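(* Let $t\ge1$ be an integer and $\mathcal{I}\subseteq[K]$. Let $x,y\in\mathbb{R}^K$ with $x_i,y_i\in(0,1]$ for all $i\in\mathcal{I}$ and $\sum_{i\in\mathcal{I}}x_i=\sum_{i\in\mathcal{I}}y_i$, and suppose there is $c\in\mathbb{R}$ with $\nabla\phi^{t+1}_{\mathcal{I}}(y)=\nabla\phi^t_{\mathcal{I}}(x)-\hat\ell^t_{\mathcal{I}}+c\cdot\mathbf{1}_{\mathcal{I}}$ (coordinatewise on $\mathcal{I}$). Then $$\sum_{i\in\mathcal{I}}y_i^{4/3}\le2\Big(1+\frac1t\Big)^2\sum_{i\in\mathcal{I}}x_i^{4/3}\le8\sum_{i\in\mathcal{I}}x_i^{4/3}.$$
   Context: $\phi^s(x)=-3K^{1/6}\sqrt{s}\sum_{i\in[K]}x_i^{2/3}$ (the $2/3$-Tsallis regularizer of Decoupled-Tsallis-INF) and $\phi^s_{\mathcal{I}}(x)=-3K^{1/6}\sqrt{s}\sum_{i\in\mathcal{I}}x_i^{2/3}$. For a vector $v$, $v_{\mathcal{I}}$ agrees with $v$ on $\mathcal{I}$ and is $0$ elsewhere; $\mathbf{1}_{\mathcal{I}}$ is the indicator vector of $\mathcal{I}$. $\hat\ell^t$ is the loss estimator of Decoupled-Tsallis-INF: $\hat\ell^t_i=\mathbb{1}\{j^t=i\}\ell^t_i/g^t_i$ for some $j^t\in[K]$, $\ell^t\in[0,1]^K$ and a probability vector $g^t$ with positive entries. *)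

From mathcomp Require Import all_boot all_order all_algebra.
From mathcomp Require Import all_classical all_reals all_analysis.
Unset Printing Implicit Defensive.
Import Order.TTheory GRing.Theory Num.Theory.
Local Open Scope ring_scope.

Definition phiI {R : realType} (K : nat) (s : nat) (I : {set 'I_K})
  (x : 'I_K -> R) : R :=
  - 3 * (K%:R `^ (1/6)) * Num.sqrt (s%:R) * \sum_(i in I) (x i `^ (2/3)).

Definition partial {R : realType} {K : nat} (f : ('I_K -> R) -> R)
  (x : 'I_K -> R) (i : 'I_K) : R :=
  derive1 (fun z : R => f (fun k => if k == i then z else x k)) (x i).

Definition loss_est {R : realType} {K : nat} (j : 'I_K) (ell g : 'I_K -> R)
  : 'I_K -> R :=
  fun i => (if j == i then 1 else 0) * ell i / g i.

(* Put p_i = x_i^(1/3) and q_i = y_i^(1/3).  The partial derivatives of the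
   2/3-Tsallis regularizer are -2 K^(1/6) sqrt(s) / x_i^(1/3), so the update
   reads sqrt(t+1) / q_i = sqrt(t) / p_i + (l_i - c) / (2 K^(1/6)), and
   sum x = sum y says that p and q have the same sum of cubes.
   If c <= 0, every coordinate satisfies q_i <= sqrt((t+1)/t) p_i, which gives
   the bound with (1 + 1/t)^2 alone.  If c > 0, then p_i < q_i except at the
   single coordinate j where the loss estimate lives, so the cube mass that j
   loses is spread over the others: writing q_i^3 = p_i^3 + e_i^3 with
   e_i <= p_j, one gets q_i <= p_i + e_i and hence
   q_i^4 <= 2 p_i^4 + 2 p_j (q_i^3 - p_i^3); summing, sum q^4 <= 2 sum p^4. *)

From mathcomp Require Import all_boot all_order all_algebra.
From mathcomp Require Import all_classical all_reals all_analysis.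
From mathcomp.algebra_tactics Require Import ring lra.
Import Order.TTheory GRing.Theory Num.Theory.
Local Open Scope ring_scope.

Section PowerSums.
Context {R : realType}.
Implicit Types p q e P : R.

Lemma powR_exprn (z r : R) n : 0 <= z -> (z `^ r) ^+ n = z `^ (r * n%:R).
Proof. by move=> z0; rewrite -powR_mulrn ?powR_ge0 // -powRrM. Qed.

Lemma cbrtK (z : R) : 0 <= z -> (z `^ (1/3)) ^+ 3 = z.
Proof.
by move=> z0; rewrite powR_exprn // (_ : 1/3 * 3%:R = 1) ?powRr1 //; field.
Qed.

Lemma powR_four_thirds (z : R) : 0 <= z -> z `^ (4/3) = (z `^ (1/3)) ^+ 4.
Proof. by move=> z0; rewrite powR_exprn // (_ : 1/3 * 4%:R = 4/3) //; field. Qed.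

Lemma ler_cube p q : 0 <= p -> 0 <= q -> (p ^+ 3 <= q ^+ 3) = (p <= q).
Proof. by move=> p0 q0; rewrite ler_pXn2r ?nnegrE. Qed.

Lemma pow4_le_of_cube_add p e q : 0 <= p -> 0 <= e -> 0 <= q ->
  q ^+ 3 = p ^+ 3 + e ^+ 3 -> q ^+ 4 <= 2 * p ^+ 4 + 2 * e ^+ 4.
Proof.
move=> p0 e0 q0 q3.
have q_le : q <= p + e.
  rewrite -ler_cube ?addr_ge0 // q3; nra.
have cube_ge0 : 0 <= p ^+ 3 + e ^+ 3 by rewrite addr_ge0 ?exprn_ge0.
(* [(p + e)(p^3 + e^3) <= 2 p^4 + 2 e^4] is [(p - e)^2 (p^2 + p e + e^2) >= 0] *)
have sos : 0 <= (p - e) ^+ 2 * (p ^+ 2 + p * e + e ^+ 2).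
  by rewrite mulr_ge0 ?sqr_ge0 // !addr_ge0 ?sqr_ge0 ?mulr_ge0.
have : q ^+ 4 <= (p + e) * (p ^+ 3 + e ^+ 3).
  by rewrite exprS -q3; apply: ler_wpM2r; rewrite ?exprn_ge0.
lra.
Qed.

Lemma pow4_le_of_cube_gap p q P : 0 <= p <= q -> 0 <= P ->
  q ^+ 3 - p ^+ 3 <= P ^+ 3 -> q ^+ 4 <= 2 * p ^+ 4 + 2 * P * (q ^+ 3 - p ^+ 3).
Proof.
move=> /andP[p0 pq] P0 gap_le.
have q0 : 0 <= q := le_trans p0 pq.
have gap0 : 0 <= q ^+ 3 - p ^+ 3 by rewrite subr_ge0 ler_cube.
set e := (q ^+ 3 - p ^+ 3) `^ (1/3).
have e0 : 0 <= e := powR_ge0 _ _.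
have e3 : e ^+ 3 = q ^+ 3 - p ^+ 3 by rewrite cbrtK.
have eP : e <= P by rewrite -ler_cube // e3.
have : q ^+ 4 <= 2 * p ^+ 4 + 2 * e ^+ 4.
  by apply: pow4_le_of_cube_add => //; rewrite e3; ring.
have : e ^+ 4 <= P * e ^+ 3 by rewrite exprS; apply: ler_wpM2r; rewrite ?exprn_ge0.
rewrite -e3; lra.
Qed.

Section CubeSums.
Context {T : finType} {I : {set T}} {p q : T -> R}.
Hypotheses (p_ge0 : forall i, i \in I -> 0 <= p i)
           (q_ge0 : forall i, i \in I -> 0 <= q i)
           (sum_cube : \sum_(i in I) p i ^+ 3 = \sum_(i in I) q i ^+ 3).

Lemma sum_pow4_le_of_eq_sum_cube_mem j : j \in I ->
  (forall i, i \in I -> i != j -> p i <= q i) ->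
  \sum_(i in I) q i ^+ 4 <= 2 * \sum_(i in I) p i ^+ 4.
Proof.
move=> jI pq.
have pj0 := p_ge0 _ jI; have qj0 := q_ge0 _ jI.
have gap0 i : i \in I -> i != j -> 0 <= q i ^+ 3 - p i ^+ 3.
  by move=> iI ij; rewrite subr_ge0 ler_cube ?p_ge0 ?q_ge0 ?pq.
set D := \sum_(i in I | i != j) (q i ^+ 3 - p i ^+ 3).
have D0 : 0 <= D by apply: sumr_ge0 => i /andP[]; exact: gap0.
have DE : D = p j ^+ 3 - q j ^+ 3.
  by move: sum_cube; rewrite /D sumrB (bigD1 j) //= [in RHS](bigD1 j) //=; lra.
have gap_le i : i \in I -> i != j -> q i ^+ 3 - p i ^+ 3 <= p j ^+ 3.
  move=> iI ij; apply: le_trans (_ : D <= _); last by rewrite DE lerBlDr lerDl exprn_ge0.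
  rewrite /D (bigD1 i) /=; last by rewrite iI ij.
  by rewrite lerDl sumr_ge0 // => k /andP[/andP[kI kj] _]; exact: gap0.
have rest : \sum_(i in I | i != j) q i ^+ 4 <=
    \sum_(i in I | i != j) (2 * p i ^+ 4 + 2 * p j * (q i ^+ 3 - p i ^+ 3)).
  apply: ler_sum => i /andP[iI ij].
  by apply: pow4_le_of_cube_gap; rewrite ?gap_le ?p_ge0 ?pq.
rewrite big_split /= -!mulr_sumr -/D DE in rest.
have qj_le : q j <= p j by rewrite -ler_cube //; lra.
have : q j ^+ 4 <= p j * q j ^+ 3 by rewrite exprS; apply: ler_wpM2r; rewrite ?exprn_ge0.
have : 0 <= p j * q j ^+ 3 by rewrite mulr_ge0 ?exprn_ge0.
rewrite (bigD1 j) //= [X in _ <= 2 * X](bigD1 j) //= [p j ^+ 4]exprS.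
lra.
Qed.

Lemma sum_pow4_le_of_eq_sum_cube j :
  (forall i, i \in I -> i != j -> p i <= q i) ->
  \sum_(i in I) q i ^+ 4 <= 2 * \sum_(i in I) p i ^+ 4.
Proof.
move=> pq; have [jI | jNI] := boolP (j \in I).
  exact: sum_pow4_le_of_eq_sum_cube_mem jI pq.
have [->|[k kI]] := set_0Vmem I; first by rewrite !big_set0 mulr0.
apply: sum_pow4_le_of_eq_sum_cube_mem kI _ => i iI _.
by apply: pq => //; apply: contraNneq _ jNI => <-.
Qed.

End CubeSums.

Lemma ler_of_reciprocal_step {a b p q d : R} : 0 < p -> 0 < q ->
  a / q = b / p + d -> (b * q <= a * p) = (0 <= d).
Proof.
move=> p0 q0 step.
have -> : d = (a * p - b * q) / (p * q).
  by rewrite -[d](addKr (b / p)) -step; field; rewrite !gt_eqF.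
by rewrite pmulr_lge0 ?invr_gt0 ?mulr_gt0 // subr_ge0.
Qed.

Section ReciprocalStep.
Context {T : finType} {I : {set T}} {j : T} {p q l : T -> R} {a b c : R}.
Hypotheses (p_gt0 : forall i, i \in I -> 0 < p i)
           (q_gt0 : forall i, i \in I -> 0 < q i)
           (sum_cube : \sum_(i in I) p i ^+ 3 = \sum_(i in I) q i ^+ 3)
           (l_ge0 : forall i, 0 <= l i) (l_eq0 : forall i, i != j -> l i = 0)
           (b_gt0 : 0 < b) (b_le_a : b <= a)
           (step : forall i, i \in I -> a / q i = b / p i + (l i - c)).

Lemma sum_pow4_le_of_reciprocal_step :
  \sum_(i in I) q i ^+ 4 <= 2 * (a / b) ^+ 4 * \sum_(i in I) p i ^+ 4.
Proof.
have a_gt0 : 0 < a := lt_le_trans b_gt0 b_le_a.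
have ratio_ge1 : 1 <= (a / b) ^+ 4 by rewrite exprn_ege1 // ler_pdivlMr // mul1r.
have sum_p4_ge0 : 0 <= \sum_(i in I) p i ^+ 4.
  by rewrite sumr_ge0 // => i /p_gt0/ltW/exprn_ge0.
have [c_le0 | c_gt0] := lerP c 0.
  have q_le i : i \in I -> q i ^+ 4 <= (a / b) ^+ 4 * p i ^+ 4.
    move=> iI; have p0 := p_gt0 _ iI; have q0 := q_gt0 _ iI.
    have qle : q i <= a / b * p i.
      rewrite mulrAC ler_pdivlMr // mulrC (ler_of_reciprocal_step p0 q0 (step _ iI)).
      by rewrite subr_ge0 (le_trans c_le0).
    have abp0 : 0 <= a / b * p i by rewrite mulr_ge0 ?divr_ge0 ?ltW.
    by rewrite -exprMn lerXn2r // !nnegrE ?ltW.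
  apply: le_trans (ler_sum _ q_le) _; rewrite -mulr_sumr; nra.
have p_le_q i : i \in I -> i != j -> p i <= q i.
  move=> iI ij; have p0 := p_gt0 _ iI; have q0 := q_gt0 _ iI.
  have : a * p i < b * q i.
    rewrite ltNge (ler_of_reciprocal_step p0 q0 (step _ iI)) l_eq0 //.
    by rewrite sub0r oppr_ge0 -ltNge.
  move=> /lt_le_trans/(_ (ler_wpM2r (ltW q0) b_le_a)).
  by rewrite ltr_pM2l // => /ltW.
have p_ge0 i : i \in I -> 0 <= p i by move/p_gt0/ltW.
have q_ge0 i : i \in I -> 0 <= q i by move/q_gt0/ltW.
have := sum_pow4_le_of_eq_sum_cube p_ge0 q_ge0 sum_cube _ p_le_q.
nra.
Qed.

End ReciprocalStep.

End PowerSums.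

Section TsallisStep.
Context {R : realType}.

Lemma partial_phiI K s (I : {set 'I_K}) (x : 'I_K -> R) i : i \in I -> 0 < x i ->
  partial (phiI K s I) x i = - (2 * K%:R `^ (1/6) * Num.sqrt s%:R) / x i `^ (1/3).
Proof.
move=> iI xi_gt0; rewrite /partial /phiI.
set C := - 3 * _ * _.
set D := \sum_(k in I | k != i) x k `^ (2/3).
have -> : (fun z => C * \sum_(k in I) (if k == i then z else x k) `^ (2/3))
    = (fun z => C * (z `^ (2/3) + D)).
  apply: funext => z; rewrite (bigD1 i) //= eqxx; congr (_ * (_ + _)).
  by apply: eq_bigr => k /andP[_ /negbTE ->].
rewrite derive1E; apply: derive_val.
apply: is_derive_eq (is_deriveZ C (is_deriveD (is_derive1_powR (2/3) xi_gt0)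
  (is_derive_cst D (x i) 1))) _.
rewrite (_ : 2/3 - 1 = - (1/3)) ?powRN; last by field.
by rewrite /C addr0 -[_ *: _]/(_ * _); field; rewrite gt_eqF ?powR_gt0.
Qed.

Lemma loss_est_ge0 K (j : 'I_K) (ell g : 'I_K -> R) i :
  0 <= ell i -> 0 < g i -> 0 <= loss_est j ell g i.
Proof. by move=> ell0 g0; rewrite /loss_est divr_ge0 ?mulr_ge0 ?(ltW g0) //; case: (j == i). Qed.

Lemma loss_est_eq0 K (j : 'I_K) (ell g : 'I_K -> R) i :
  i != j -> loss_est j ell g i = 0.
Proof. by rewrite /loss_est eq_sym => /negbTE ->; rewrite !mul0r. Qed.

Lemma sqrt_succ_ratio_pow4 (A : R) t : 0 < A -> (0 < t)%N ->
  ((A * Num.sqrt t.+1%:R) / (A * Num.sqrt t%:R)) ^+ 4 = (1 + 1 / t%:R) ^+ 2.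
Proof.
move=> A_gt0 t_gt0.
rewrite -mulf_div divff ?gt_eqF // mul1r (exprM _ 2 2) expr_div_n !sqr_sqrtr ?ler0n //.
by rewrite -natr1; congr (_ ^+ 2); field; rewrite pnatr_eq0 -lt0n.
Qed.

End TsallisStep.

Theorem lemma26 (R : realType) (K t : nat) (I : {set 'I_K})
  (j : 'I_K) (ell g : 'I_K -> R) (x y : 'I_K -> R) (c : R) :
  (1 <= t)%N ->
  (forall i, 0 <= ell i <= 1) ->
  (forall i, 0 < g i) -> \sum_i g i = 1 ->
  (forall i, i \in I -> 0 < x i <= 1) ->
  (forall i, i \in I -> 0 < y i <= 1) ->
  \sum_(i in I) x i = \sum_(i in I) y i ->
  (forall i, i \in I ->
     partial (phiI K t.+1 I) y i
     = partial (phiI K t I) x i - loss_est j ell g i + c) ->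
  \sum_(i in I) (y i `^ (4/3)) <=
    2 * (1 + 1 / t%:R) ^+ 2 * \sum_(i in I) (x i `^ (4/3)) /\
  2 * (1 + 1 / t%:R) ^+ 2 * \sum_(i in I) (x i `^ (4/3)) <=
    8 * \sum_(i in I) (x i `^ (4/3)).
Proof.
move=> t_gt0 ell01 g_gt0 _ x01 y01 sum_xy step.
have x_gt0 i : i \in I -> 0 < x i by case/x01/andP.
have y_gt0 i : i \in I -> 0 < y i by case/y01/andP.
have sum_pow43 (z : 'I_K -> R) : (forall i, i \in I -> 0 < z i) ->
    \sum_(i in I) z i `^ (4/3) = \sum_(i in I) (z i `^ (1/3)) ^+ 4.
  by move=> z_gt0; apply: eq_bigr => i /z_gt0/ltW/powR_four_thirds.
have sum_cube (z : 'I_K -> R) : (forall i, i \in I -> 0 < z i) ->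
    \sum_(i in I) (z i `^ (1/3)) ^+ 3 = \sum_(i in I) z i.
  by move=> z_gt0; apply: eq_bigr => i /z_gt0/ltW/cbrtK.
rewrite !sum_pow43 //.
have ratio_le4 : (1 + 1 / t%:R) ^+ 2 <= 4 :> R.
  have : 1 / t%:R <= 1 :> R by rewrite ler_pdivrMr ?ltr0n // mul1r ler1n.
  have : 0 <= 1 / t%:R :> R by rewrite divr_ge0.
  nra.
split; last by rewrite ler_wpM2r ?sumr_ge0 // => [i _|]; [rewrite exprn_ge0 ?powR_ge0 | nra].
have A_gt0 : 0 < 2 * K%:R `^ (1/6) :> R.
  by rewrite mulr_gt0 ?powR_gt0 // ltr0n (leq_ltn_trans _ (ltn_ord j)).
rewrite -(sqrt_succ_ratio_pow4 _ _ A_gt0 t_gt0).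
apply: (sum_pow4_le_of_reciprocal_step (j := j) (l := loss_est j ell g) (c := c)).
- by move=> i /x_gt0/powR_gt0.
- by move=> i /y_gt0/powR_gt0.
- by rewrite !sum_cube.
- by move=> i; apply: loss_est_ge0; [case/andP: (ell01 i) | apply: g_gt0].
- exact: loss_est_eq0.
- by rewrite mulr_gt0 // sqrtr_gt0 ltr0n.
- by apply: ler_wpM2l; rewrite ?(ltW A_gt0) // ler_sqrt ?ltr0n // ler_nat.
move=> i iI; move: (step i iI).
by rewrite !partial_phiI ?x_gt0 ?y_gt0 // !mulNr; lra.
Qed.
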